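(* Let $\ell$ be a prime, and let $n, d \ge 1$. Let $G \le G_n$ be a subgroup with $\dim(G_n/G) < \frac{n}{d}$. Then there exists an index $1 \le i \le n$ that is $d$-degenerate under $G$.
   Context: $G_n\cong(\mathbb{Z}/\ell)^n = \mathbb{F}_\ell^n$, with elements written $g=(g_1,\dots,g_n)$ and the group written multiplicatively. $\dim(G_n/G)$ denotes the dimension of $G_n/G$ as an $\mathbb{F}_\ell$-vector space. For a multi-index $\vec{i}=(1\le i_1<\dots<i_{d'}\le n)$, set $G_{\vec{i}}=\{g\in G_n \mid g_{i_1}\cdots g_{i_{d'}}=1\}$. An index $i$ is $d$-degenerate under $G\le G_n$ if $G$ is not contained in $G_{\vec{i}}$ for any $d'\le d$ and any multi-index $\vec{i}$ of length $d'$ containing $i$. *)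

From mathcomp Require Import all_boot all_algebra all_fingroup.
Set Implicit Arguments. Unset Strict Implicit. Unset Printing Implicit Defensive.
Import GRing.Theory.

(* G_n = (Z/l)^n = F_l^n, modelled as row vectors 'rV['F_l]_n; its group
   structure is the additive group (the paper writes it multiplicatively,
   so "g_{i1} ... g_{id'} = 1" becomes "g_{i1} + ... + g_{id'} = 0"). *)
Notation Gn l n := 'rV['F_l]_n.

(* G_I = { g | sum_{k in I} g_k = 0 }, where the multi-index
   i_1 < ... < i_{d'} is represented by the set I = {i_1,...,i_{d'}}. *)
Definition Gmulti (l n : nat) (I : {set 'I_n}) : {set Gn l n} :=
  [set g : Gn l n | (\sum_(k in I) g 0 k == 0)%R].

Definition dim_quot (l n : nat) (G : {group Gn l n}) : nat :=
  logn l (#|[set: Gn l n] : G|)%g.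

Definition degenerate (l n d : nat) (G : {group Gn l n}) (i : 'I_n) : Prop :=
  forall I : {set 'I_n}, i \in I -> #|I| <= d -> ~~ (G \subset Gmulti l I).

From mathcomp Require Import all_boot all_algebra all_fingroup mxabelem.
Set Implicit Arguments. Unset Strict Implicit. Unset Printing Implicit Defensive.
Import GRing.Theory Num.Theory.

(* If no index is d-degenerate, every i lies in a set I_i of size at most d
   with G inside G_{I_i}, i.e. G is killed by the n functionals
   g |-> sum_{k in I_i} g_k, the rows of the incidence matrix A of the I_i.
   Hence dim(G_n/G) >= rank A.  On the other hand, pick rank A rows of A
   spanning its row space: every column i is hit by row i, hence by one of
   the chosen rows, each of which has at most d nonzero entries, so
   n <= d * rank A <= d * dim(G_n/G). *)

Section RankSupport.

Variables (F : fieldType) (m n d : nat) (A : 'M[F]_(m, n)).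

Lemma maxrowsub_col_neq0 j :
  (exists i, (A i j != 0)%R) -> exists t, (A (maxrankfun A t) j != 0)%R.
Proof.
case=> i nzAij; apply/existsP; apply: contraR nzAij => /existsPn Aj0.
have /submxP[c rowA] : (row i A <= rowsub (maxrankfun A) A)%MS.
  by rewrite eq_maxrowsub row_sub.
have -> : A i j = row i A ord0 j by rewrite mxE.
by rewrite rowA mxE big1 // => t _; rewrite !mxE (eqP (negbNE (Aj0 t))) mulr0.
Qed.

Lemma leq_cols_rank_support :
  (forall j, exists i, (A i j != 0)%R) ->
  (forall i, #|[set j | (A i j != 0)%R]| <= d) ->
  n <= \rank A * d.
Proof.
move=> nz_col sparse_row; set f := maxrankfun A.
have covered : n <= \sum_(t < \rank A) #|[set j | (A (f t) j != 0)%R]|.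
  under eq_bigr => t _ do rewrite -sum1_card big_mkcond /=.
  rewrite exchange_big /= -[n in n <= _]card_ord -sum1_card; apply: leq_sum => j _.
  have [t nzAtj] := maxrowsub_col_neq0 (nz_col j).
  by rewrite (bigD1 t) //= inE nzAtj.
apply: leq_trans covered _.
by rewrite -[X in X * d]card_ord -sum_nat_const; apply: leq_sum.
Qed.

End RankSupport.

Lemma dvdn_rank_indexg (F : finFieldType) (m n : nat) (M : 'M[F]_(n, m))
    (G : {group 'rV[F]_n}) :
  G \subset rowg (kermx M) -> #|F| ^ \rank M %| #|[set: 'rV[F]_n] : G|%g.
Proof.
move=> sGK; set K := rowg (kermx M).
have indexK : #|[set: 'rV[F]_n] : K|%g = #|F| ^ \rank M.
  have /eqP := Lagrange (subsetT K).
  rewrite cardsT card_mx mul1n card_rowg mxrank_ker.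
  have -> : #|F| ^ n = #|F| ^ (n - \rank M) * #|F| ^ \rank M.
    by rewrite -expnD subnK // rank_leq_row.
  by rewrite eqn_pmul2l ?expn_gt0 ?(ltnW (card_finNzRing_gt1 F)) // => /eqP.
by rewrite -(Lagrange_index (subsetT K) sGK) indexK dvdn_mulr.
Qed.

Definition incidence_mx (R : nzSemiRingType) (m n : nat)
    (I : 'I_m -> {set 'I_n}) : 'M[R]_(m, n) :=
  \matrix_(i, k) ((k \in I i)%:R)%R.

Lemma support_incidence_mx (R : nzSemiRingType) (m n : nat)
    (I : 'I_m -> {set 'I_n}) (i : 'I_m) :
  [set k | (incidence_mx R I i k != 0)%R] = I i.
Proof.
apply/setP => k; rewrite !inE mxE.
by case: (k \in I i); rewrite ?mulr1n ?oner_eq0 ?eqxx.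
Qed.

Lemma sub_rowg_kermx_incidence (l n m : nat) (I : 'I_m -> {set 'I_n})
    (G : {set Gn l n}) :
  (forall i, G \subset Gmulti l (I i)) ->
  G \subset rowg (kermx (incidence_mx 'F_l I)^T).
Proof.
move=> sGI; apply/subsetP => g Gg; rewrite mem_rowg sub_kermx.
apply/eqP/rowP => i; rewrite !mxE.
have := subsetP (sGI i) g Gg; rewrite inE => /eqP {2}<-.
rewrite [RHS]big_mkcond /=; apply: eq_bigr => k _; rewrite !mxE.
by case: (k \in I i); rewrite ?mulr1 ?mulr0.
Qed.

Definition degenerateb (l n d : nat) (G : {group Gn l n}) (i : 'I_n) : bool :=
  [forall I : {set 'I_n}, (i \in I) ==> (#|I| <= d) ==> ~~ (G \subset Gmulti l I)].

Lemma degenerateP (l n d : nat) (G : {group Gn l n}) (i : 'I_n) :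
  reflect (degenerate d G i) (degenerateb d G i).
Proof.
apply: (iffP forallP) => [deg I iI cardI | deg I].
  by have /implyP/(_ iI)/implyP/(_ cardI) := deg I.
by apply/implyP => iI; apply/implyP; exact: deg.
Qed.

Theorem lemma2p11 (l n d : nat) (G : {group Gn l n}) :
  prime l -> 1 <= n -> 1 <= d ->
  ((dim_quot G)%:R < n%:R / d%:R :> rat)%R ->
  exists i : 'I_n, degenerate d G i.
Proof.
move=> l_prime _ d_gt0; rewrite ltr_pdivlMr ?ltr0n // -natrM ltr_nat => small_dim.
have [/existsP[i /degenerateP]|/existsPn nondeg] := boolP [exists i, degenerateb d G i].
  by exists i.
have /fin_all_exists[I hI] : forall i, exists I : {set 'I_n},
    [&& i \in I, #|I| <= d & G \subset Gmulti l I].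
  move=> i; apply/existsP; move: (nondeg i).
  apply: contraR => /existsPn noI; apply/forallP => J.
  by case: (i \in J) (#|J| <= d) (noI J) => [] [].
pose A := incidence_mx 'F_l I.
have rank_ge : n <= \rank A * d.
  apply: leq_cols_rank_support => [j | i]; last first.
    by rewrite support_incidence_mx; case/and3P: (hI i).
  by exists j; rewrite mxE; case/and3P: (hI j) => -> _ _; rewrite oner_eq0.
have rank_le : \rank A <= dim_quot G.
  have sGK : G \subset rowg (kermx A^T).
    by apply: sub_rowg_kermx_incidence => i; case/and3P: (hI i).
  have := dvdn_rank_indexg sGK; rewrite mxrank_tr card_Fp //.
  by rewrite pfactor_dvdn // indexg_gt0.
by have := leq_trans rank_ge (leq_mul rank_le (leqnn d)); rewrite leqNgt small_dim.
Qed.
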